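(* Let $p$ be a prime and let $\mathbb{C}_p$ be the field of complex $p$-adic numbers with $p$-adic norm $|\cdot|_p$. Let $a,b,c\in\mathbb{C}_p$ with $b\neq 0$ and $c\neq ab$, and let $f(x)=\frac{x+a}{bx+c}$ for $x\in\mathbb{C}_p$, $x\neq \hat x:=-c/b$. Fix a square root $\sqrt{(c-1)^2+4ab}\in\mathbb{C}_p$ and let $$x_1=\frac{1-c+\sqrt{(c-1)^2+4ab}}{2b},\qquad x_2=\frac{1-c-\sqrt{(c-1)^2+4ab}}{2b}$$ be the fixed points of $f$. Assume $$|f'(x_i)|_p=\left|\frac{c-ab}{(bx_i+c)^2}\right|_p=1\quad (i=1,2)$$ and $$\left|\frac{b}{\sqrt{c-ab}}\right|_p<1 .$$ Put $\varepsilon_c=\left|\frac{\sqrt{c-ab}}{b}\right|_p-1$. Then for $i=1,2$ the maximum Siegel disk of $f$ centered at $x_i$ is $$SI(x_i)=V_{1+\varepsilon_c}(x_i).$$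
   Context: For $x_0\in\mathbb{C}_p$ and $r>0$: $U_r(x_0)=\{x\in\mathbb{C}_p:|x-x_0|_p\le r\}$, $V_r(x_0)=\{x\in\mathbb{C}_p:|x-x_0|_p<r\}$, $S_r(x_0)=\{x\in\mathbb{C}_p:|x-x_0|_p=r\}$. The value $|\sqrt{c-ab}|_p=|c-ab|_p^{1/2}$ does not depend on the choice of square root. For a fixed point $x_0$ of $f$, a ball $V_r(x_0)$ (contained in the domain of $f$) is called a Siegel disk if every sphere $S_\rho(x_0)$ with $\rho<r$ is invariant, i.e. for every $x\in S_\rho(x_0)$ all iterates $f^n(x)$, $n=1,2,\dots$, are defined and lie in $S_\rho(x_0)$. The maximum Siegel disk $SI(x_0)$ is the union of all Siegel disks centered at $x_0$. *)

From HB Require Import structures.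
From mathcomp Require Import all_boot all_order all_algebra.
From mathcomp Require Import reals.
Set Implicit Arguments. Unset Strict Implicit. Unset Printing Implicit Defensive.
Import Order.TTheory GRing.Theory Num.Theory.
Local Open Scope ring_scope.

(* An abstract model of (C_p, |.|_p): an algebraically closed field K
   (closedFieldType) with a non-archimedean absolute value nrm : K -> R
   normalized by |p| = 1/p, complete w.r.t. nrm. *)
Record Cp_structure (p : nat) (K : closedFieldType) (R : realType)
    (nrm : K -> R) : Prop := {
  Cp_prime : prime p;
  Cp_nrm_ge0 : forall x, 0 <= nrm x;
  Cp_nrm_eq0 : forall x, nrm x = 0 <-> x = 0;
  Cp_nrmM : forall x y, nrm (x * y) = nrm x * nrm y;
  Cp_nrm_ultra : forall x y, nrm (x + y) <= Num.max (nrm x) (nrm y);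
  Cp_nrm_p : nrm (p%:R) = (p%:R)^-1;
  Cp_complete : forall u : nat -> K,
    (forall e : R, 0 < e -> exists N, forall m n, (N <= m)%N -> (N <= n)%N ->
        nrm (u m - u n) < e) ->
    exists l, forall e : R, 0 < e -> exists N, forall n, (N <= n)%N ->
        nrm (u n - l) < e
}.

Section Moebius.
Variables (K : fieldType) (R : realType) (nrm : K -> R).

Definition mob (a b c : K) (x : K) : K := (x + a) / (b * x + c).
Definition mob_pole (b c : K) : K := - c / b.

Definition open_ball (x0 : K) (r : R) : K -> Prop := fun x => nrm (x - x0) < r.
Definition sphere (x0 : K) (rho : R) : K -> Prop := fun x => nrm (x - x0) = rho.

Definition siegel_disk (a b c x0 : K) (r : R) : Prop :=
  0 < r /\
  (forall x, open_ball x0 r x -> x <> mob_pole b c) /\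
  (forall rho : R, 0 <= rho -> rho < r -> forall x, sphere x0 rho x ->
     forall n : nat,
       iter n (mob a b c) x <> mob_pole b c /\
       sphere x0 rho (iter n.+1 (mob a b c) x)).

Definition max_siegel_disk (a b c x0 : K) : K -> Prop :=
  fun x => exists r : R, siegel_disk a b c x0 r /\ open_ball x0 r x.

End Moebius.

From HB Require Import structures.
From mathcomp Require Import all_boot all_order all_algebra.
From mathcomp Require Import reals.
From mathcomp Require Import ring.
Set Implicit Arguments. Unset Strict Implicit. Unset Printing Implicit Defensive.
Import Order.TTheory GRing.Theory Num.Theory.
Local Open Scope ring_scope.

(* Near an indifferent fixed point x0 the identity
     f(x) - x0 = f'(x0) (x - x0) (b x0 + c) / (b x + c)
   together with the strong triangle inequality shows that |b x + c| = |b x0 + c|,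
   hence |f(x) - x0| = |x - x0|, as long as x is closer to x0 than the pole -c/b.
   So every sphere around x0 of radius below |x0 + c/b| is invariant, while no
   Siegel disk can contain the pole.  Finally |b x_i + c|^2 = |c - ab| = |s|^2
   turns |x_i + c/b| into |s/b| = 1 + eps_c. *)

Record nonarch_abs (K : fieldType) (R : realFieldType) (nrm : K -> R) : Prop := {
  nrm_ge0 : forall x, 0 <= nrm x;
  nrm_eq0 : forall x, nrm x = 0 <-> x = 0;
  nrmM : forall x y, nrm (x * y) = nrm x * nrm y;
  nrm_ultra : forall x y, nrm (x + y) <= Num.max (nrm x) (nrm y)
}.

Lemma Cp_nonarch_abs p (K : closedFieldType) (R : realType) (nrm : K -> R) :
  Cp_structure p nrm -> nonarch_abs nrm.
Proof. by case. Qed.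

Section NonArchimedeanAbsoluteValue.
Variables (K : fieldType) (R : realFieldType) (nrm : K -> R).
Hypothesis Hnrm : nonarch_abs nrm.

Lemma nrm0 : nrm 0 = 0.
Proof. exact/(nrm_eq0 Hnrm). Qed.

Lemma nrm_neq0 x : x != 0 -> nrm x != 0.
Proof. by move=> x0; apply: contra_neq x0 => /(nrm_eq0 Hnrm). Qed.

Lemma nrm_gt0 x : x != 0 -> 0 < nrm x.
Proof. by move=> x0; rewrite lt0r nrm_neq0 // nrm_ge0. Qed.

Lemma nrm1 : nrm 1 = 1.
Proof.
apply: (mulfI (nrm_neq0 (oner_neq0 K))).
by rewrite -(nrmM Hnrm) !mulr1.
Qed.

Lemma nrm_sqr_inj x y : nrm x ^+ 2 = nrm y ^+ 2 -> nrm x = nrm y.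
Proof. by move/eqP; rewrite eqrXn2 ?(nrm_ge0 Hnrm) // => /eqP. Qed.

Lemma nrmN x : nrm (- x) = nrm x.
Proof.
have nrmN1 : nrm (-1) = 1.
  by rewrite -nrm1; apply: nrm_sqr_inj; rewrite !expr2 -!(nrmM Hnrm) mulrNN.
by rewrite -mulN1r (nrmM Hnrm) nrmN1 mul1r.
Qed.

Lemma nrmV x : nrm x^-1 = (nrm x)^-1.
Proof.
have [->|x0] := eqVneq x 0; first by rewrite invr0 nrm0 invr0.
apply: (mulfI (nrm_neq0 x0)).
by rewrite -(nrmM Hnrm) !divff ?nrm_neq0 // nrm1.
Qed.

Lemma nrmD_dominant x y : nrm x < nrm y -> nrm (x + y) = nrm y.
Proof.
move=> xy; apply/eqP; rewrite eq_le; apply/andP; split.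
  by apply: le_trans (nrm_ultra Hnrm x y) _; rewrite ge_max (ltW xy) lexx.
have := nrm_ultra Hnrm (x + y) (- x); rewrite addrC addKr nrmN le_max.
by case/orP=> // yx; have := lt_le_trans xy yx; rewrite ltxx.
Qed.

Lemma nrm_divX2_eq1 u v : nrm (v / u ^+ 2) = 1 -> u != 0 /\ nrm v = nrm u ^+ 2.
Proof.
have [->|u0] := eqVneq u 0.
  by rewrite expr0n /= invr0 mulr0 nrm0 => /esym/eqP; rewrite oner_eq0.
by rewrite (nrmM Hnrm) nrmV => /divr1_eq ->; rewrite expr2 (nrmM Hnrm).
Qed.

End NonArchimedeanAbsoluteValue.

Lemma Cp_natr2_neq0 p (K : closedFieldType) (R : realType) (nrm : K -> R) :
  Cp_structure p nrm -> (2%:R : K) != 0.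
Proof.
move=> HK; apply/negP => /eqP two0.
have Hnrm := Cp_nonarch_abs HK.
have p_gt1 := prime_gt1 (Cp_prime HK).
have p_parity : (p%:R : K) = (odd p)%:R.
  by rewrite {1}(divn_eq p 2) modn2 natrD natrM two0 mulr0 add0r.
have := Cp_nrm_p HK; rewrite p_parity.
case: (odd p); rewrite ?(nrm1 Hnrm) ?(nrm0 Hnrm) => /esym/eqP.
  by rewrite invr_eq1 pnatr_eq1 => /eqP p1; rewrite p1 in p_gt1.
by rewrite invr_eq0 pnatr_eq0 => /eqP p0; rewrite p0 in p_gt1.
Qed.

Section IndifferentFixedPoint.
Variables (K : fieldType) (R : realType) (nrm : K -> R).
Hypothesis Hnrm : nonarch_abs nrm.
Variables (a b c x0 : K).
Hypotheses (b0 : b != 0) (x0_reg : b * x0 + c != 0).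
Hypothesis x0_fixed : mob a b c x0 = x0.
Hypothesis x0_indifferent : nrm (c - a * b) = nrm (b * x0 + c) ^+ 2.

Local Notation f := (mob a b c).
Local Notation pole := (mob_pole b c).

Lemma nrm_pole_sub : nrm (pole - x0) = nrm (b * x0 + c) / nrm b.
Proof.
have -> : pole - x0 = - ((b * x0 + c) / b) by rewrite /mob_pole; field.
by rewrite (nrmN Hnrm) (nrmM Hnrm) (nrmV Hnrm).
Qed.

Lemma nrm_pole_sub_gt0 : 0 < nrm (pole - x0).
Proof. by rewrite nrm_pole_sub divr_gt0 ?(nrm_gt0 Hnrm). Qed.

Lemma mob_sub_fixed x : b * x + c != 0 ->
  f x - x0 = (c - a * b) * (x - x0) / ((b * x + c) * (b * x0 + c)).
Proof. by move=> x_reg; rewrite -{1}x0_fixed /mob; field; apply/andP. Qed.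

Lemma nrm_denom_in_ball x : nrm (x - x0) < nrm (pole - x0) ->
  nrm (b * x + c) = nrm (b * x0 + c).
Proof.
move=> x_in; have -> : b * x + c = b * (x - x0) + (b * x0 + c) by ring.
apply: (nrmD_dominant Hnrm) => //.
by rewrite (nrmM Hnrm) mulrC -ltr_pdivlMr ?(nrm_gt0 Hnrm) // -nrm_pole_sub.
Qed.

Lemma mob_isometry_in_ball x : nrm (x - x0) < nrm (pole - x0) ->
  nrm (f x - x0) = nrm (x - x0).
Proof.
move=> x_in; have denom := nrm_denom_in_ball x_in.
have x_reg : b * x + c != 0.
  apply: contra_neq (nrm_neq0 Hnrm x0_reg) => x_pole.
  by rewrite -denom x_pole (nrm0 Hnrm).
rewrite mob_sub_fixed // (nrmM Hnrm) (nrmV Hnrm) !(nrmM Hnrm) denom x0_indifferent.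
by field; rewrite (nrm_neq0 Hnrm).
Qed.

Lemma iter_mob_sphere rho x : rho < nrm (pole - x0) -> sphere nrm x0 rho x ->
  forall n, sphere nrm x0 rho (iter n f x).
Proof.
move=> rho_lt x_rho; elim=> [//|n IHn].
by rewrite /sphere iterS mob_isometry_in_ball IHn.
Qed.

Lemma siegel_disk_pole_dist : siegel_disk nrm a b c x0 (nrm (pole - x0)).
Proof.
split; first exact: nrm_pole_sub_gt0.
split=> [x x_in x_pole|rho _ rho_lt x x_rho n].
  by move: x_in; rewrite /open_ball x_pole ltxx.
have orbit := iter_mob_sphere rho_lt x_rho.
split; last exact: orbit.
by move=> xn_pole; move: (orbit n) rho_lt; rewrite /sphere xn_pole => ->; rewrite ltxx.
Qed.

Lemma siegel_disk_le_pole_dist r :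
  siegel_disk nrm a b c x0 r -> r <= nrm (pole - x0).
Proof. by case=> _ [no_pole _]; rewrite leNgt; apply/negP => /no_pole; apply. Qed.

Lemma max_siegel_diskE x :
  max_siegel_disk nrm a b c x0 x <-> open_ball nrm x0 (nrm (pole - x0)) x.
Proof.
split=> [[r [/siegel_disk_le_pole_dist r_le x_in]]|x_in].
  exact: lt_le_trans x_in r_le.
by exists (nrm (pole - x0)); split=> //; apply: siegel_disk_pole_dist.
Qed.

End IndifferentFixedPoint.

Lemma mob_quadratic_fixed (K : fieldType) (a b c d : K) :
  (2%:R : K) != 0 -> b != 0 -> d ^+ 2 = (c - 1) ^+ 2 + 4%:R * a * b ->
  let x := (1 - c + d) / (2%:R * b) in
  b * x + c != 0 -> mob a b c x = x.
Proof.
move=> two0 b0 discr x x_reg.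
have root : x * (b * x + c) = x + a.
  apply/eqP; rewrite -subr_eq0.
  have four0 : (4%:R : K) != 0 by rewrite (natrM K 2 2) mulf_neq0.
  have -> : x * (b * x + c) - (x + a) =
      (d ^+ 2 - ((c - 1) ^+ 2 + 4%:R * a * b)) / (4%:R * b).
    by rewrite /x; field; rewrite b0 four0 two0.
  by rewrite discr subrr mul0r.
by rewrite /mob -root mulfK.
Qed.

Lemma max_siegel_disk_root p (K : closedFieldType) (R : realType) (nrm : K -> R)
    (HK : Cp_structure p nrm) (a b c d s : K) :
  b != 0 -> d ^+ 2 = (c - 1) ^+ 2 + 4%:R * a * b -> s ^+ 2 = c - a * b ->
  let x0 := (1 - c + d) / (2%:R * b) in
  nrm ((c - a * b) / (b * x0 + c) ^+ 2) = 1 ->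
  forall x, max_siegel_disk nrm a b c x0 x <-> open_ball nrm x0 (nrm (s / b)) x.
Proof.
have Hnrm := Cp_nonarch_abs HK.
move=> b0 discr s2 x0 /(nrm_divX2_eq1 Hnrm) [x0_reg x0_indiff].
have radius : nrm (mob_pole b c - x0) = nrm (s / b).
  rewrite (nrm_pole_sub Hnrm) // (nrmM Hnrm) (nrmV Hnrm); congr (_ * _).
  by apply: (nrm_sqr_inj Hnrm); rewrite -x0_indiff -s2 expr2 (nrmM Hnrm) expr2.
rewrite -radius; apply: (max_siegel_diskE Hnrm) => //.
exact: mob_quadratic_fixed (Cp_natr2_neq0 HK) b0 discr x0_reg.
Qed.

Theorem theorem3p2 (p : nat) (K : closedFieldType) (R : realType)
  (nrm : K -> R) (HK : Cp_structure p nrm)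
  (a b c : K) (hb : b != 0) (hc : c != a * b)
  (d : K) (hd : d ^+ 2 = (c - 1) ^+ 2 + 4%:R * a * b)
  (s : K) (hs : s ^+ 2 = c - a * b) :
  let x1 := (1 - c + d) / (2%:R * b) in
  let x2 := (1 - c - d) / (2%:R * b) in
  nrm ((c - a * b) / (b * x1 + c) ^+ 2) = 1 ->
  nrm ((c - a * b) / (b * x2 + c) ^+ 2) = 1 ->
  nrm (b / s) < 1 ->
  let eps_c := nrm (s / b) - 1 in
  forall x : K,
    (max_siegel_disk nrm a b c x1 x <-> open_ball nrm x1 (1 + eps_c) x) /\
    (max_siegel_disk nrm a b c x2 x <-> open_ball nrm x2 (1 + eps_c) x).
Proof.
move=> x1 x2 x1_indiff x2_indiff _ eps_c x.
rewrite /eps_c addrC subrK.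
have hd' : (- d) ^+ 2 = (c - 1) ^+ 2 + 4%:R * a * b by rewrite sqrrN.
split.
- exact: max_siegel_disk_root HK a b c d s hb hd hs x1_indiff x.
(* [x2] is syntactically [(1 - c + - d) / (2 * b)]. *)
- exact: max_siegel_disk_root HK a b c (- d) s hb hd' hs x2_indiff x.
Qed.
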